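(* Let $q(y,\eta)=(\eta-Ay)^2+\frac12 Vy\cdot y$, $(y,\eta)\in\mathbb{R}^{2n}$, where $A$ is a real $n\times n$ matrix and $V$ is a complex symmetric $n\times n$ matrix with $\mathrm{Re}\,V\geq 0$. Then the restriction of $q$ to its singular space $S$ is elliptic if and only if the matrix $V$ is invertible.
   Context: For a complex-valued quadratic form $q$ on $\mathbb{R}^{2n}_{y,\eta}$ with $\mathrm{Re}\,q\geq 0$, the singular space is $S=\{Y\in\mathbb{R}^{2n};\ H^k_{\mathrm{Im}\,q}\mathrm{Re}\,q(Y)=0\ \text{for all } k\in\mathbb{N}\}$, where for real $f\in C^1(\mathbb{R}^{2n})$, $H_f=f'_{\eta}\cdot\partial_y-f'_y\cdot\partial_{\eta}$ is its Hamilton vector field. The restriction of $q$ to $S$ is called elliptic if $Y\in S$, $q(Y)=0$ imply $Y=0$. *)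

From HB Require Import structures.
From mathcomp Require Import all_boot all_order all_algebra.
From mathcomp Require Import all_classical all_reals all_analysis.
From mathcomp Require Import complex.
Set Implicit Arguments. Unset Strict Implicit. Unset Printing Implicit Defensive.
Import Order.TTheory GRing.Theory Num.Theory.
Import numFieldNormedType.Exports.
Local Open Scope ring_scope.

Section Defs.
Variables (R : realType) (n : nat).

Definition ycoord (Y : 'rV[R]_(n + n)) : 'rV[R]_n := lsubmx Y.
Definition etacoord (Y : 'rV[R]_(n + n)) : 'rV[R]_n := rsubmx Y.

Definition e_y (j : 'I_n) : 'rV[R]_(n + n) := delta_mx 0 (lshift n j).
Definition e_eta (j : 'I_n) : 'rV[R]_(n + n) := delta_mx 0 (rshift n j).

Definition hamilton (f g : 'rV[R]_(n + n) -> R) : 'rV[R]_(n + n) -> R :=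
  fun Y => \sum_(j < n)
    ('D_(e_eta j) f Y * 'D_(e_y j) g Y - 'D_(e_y j) f Y * 'D_(e_eta j) g Y).

Definition singular_space (q : 'rV[R]_(n + n) -> R[i]) : set 'rV[R]_(n + n) :=
  [set Y | forall k : nat,
     iter k (hamilton (fun Z => complex.Im (q Z))) (fun Z => complex.Re (q Z)) Y = 0].

Definition elliptic_on_singular_space (q : 'rV[R]_(n + n) -> R[i]) : Prop :=
  forall Y, singular_space q Y -> q Y = 0 -> Y = 0.

Definition qAV (A : 'M[R]_n) (V : 'M[R[i]]_n) (Y : 'rV[R]_(n + n)) : R[i] :=
  let y := ycoord Y in
  let d := etacoord Y - y *m A^T in
  ((\sum_(i < n) d 0 i ^+ 2)%:C)%C
  + (2%:R)^-1 * \sum_(i < n) \sum_(j < n) V i j * (y 0 i)%:C%C * (y 0 j)%:C%C.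

Definition re_psd (V : 'M[R[i]]_n) : Prop :=
  forall y : 'rV[R]_n, 0 <= \sum_(i < n) \sum_(j < n) complex.Re (V i j) * y 0 i * y 0 j.

End Defs.

From HB Require Import structures.
From mathcomp Require Import all_boot all_order all_algebra.
From mathcomp Require Import all_classical all_reals all_analysis.
From mathcomp Require Import complex.
From mathcomp Require Import ring lra.
Import Order.TTheory GRing.Theory Num.Theory.
Import numFieldNormedType.Exports.
Set Implicit Arguments. Unset Strict Implicit. Unset Printing Implicit Defensive.
Local Open Scope ring_scope.

(* Write U = Re V and W = Im V. Then Re q = |eta - Ay|^2 + 1/2 U y.y, while
   Im q = 1/2 W y.y depends on y only, so H_{Im q} = -(W y).d_eta. Hence
   H_{Im q} Re q = -2 W y.(eta - Ay), H_{Im q}^2 Re q = 2 |W y|^2, and all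
   further iterates vanish. As U >= 0, the singular space is
   {eta = Ay, U y = W y = 0}, and q vanishes on it: q is elliptic on S iff
   no nonzero real y has U y = W y = 0. For V symmetric with U >= 0 this
   means V is invertible: if V (a + i b) = 0 with a, b real, then
   U a.a + U b.b = 0, so U a = U b = 0 and then W a = W b = 0. *)

Lemma map_mx_sym (T S : Type) (f : T -> S) n (M : 'M[T]_n) :
  M^T = M -> (map_mx f M)^T = map_mx f M.
Proof. by move=> M_sym; rewrite map_trmx M_sym. Qed.

Lemma quadratic_ge0_lin_eq0 (R : realFieldType) (a b : R) :
  (forall t, 0 <= t * a + t ^+ 2 * b) -> a = 0.
Proof.
move=> ge0; have b_ge0 : 0 <= b by have := ge0 1; have := ge0 (-1); lra.
set e := (b + 1)^-1; have eK : e * (b + 1) = 1 by rewrite mulVf //; lra.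
(* at t = -a/(b+1) the quadratic equals -(a/(b+1))^2 *)
have : (a * e) ^+ 2 == 0.
  rewrite eq_le sqr_ge0 andbT -oppr_ge0; have := ge0 (- a * e); congr (0 <= _).
  by rewrite -[in LHS](mulr1 (_ * a)) -eK; ring.
rewrite sqrf_eq0 mulf_eq0 invr_eq0 => /orP[/eqP //|/eqP]; lra.
Qed.

Lemma derive_quadratic (R : numFieldType) (X : normedModType R) (f : X -> R)
    (a v : X) (c b : R) :
  (forall h, f (a + h *: v) = f a + h * c + h ^+ 2 * b) -> 'D_v f a = c.
Proof.
move=> fE.
have -> : 'D_v f a = 'D_1 (fun h : R => f a + h * c + h ^+ 2 * b) 0.
  rewrite /derive; set g1 := fun h => h^-1 *: _; set g2 := fun h => h^-1 *: _.
  suff -> : g1 = g2 by [].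
  apply: funext => h; rewrite /g1 /g2 /= [_ + a]addrC fE [_%:A]mulr1 addr0.
  by rewrite !mul0r expr0n /= mul0r !addr0.
rewrite (@derive_val _ _ _ (0 : R) 1 (fun h : R => f a + h * c + h ^+ 2 * b) _ _).
by rewrite expr0n /= !scale0r !(scaler0, add0r, addr0) [_%:A]mulr1.
Qed.

Section RowDot.
Variables (R : realFieldType) (n : nat).
Implicit Types (u v w y : 'rV[R]_n) (M : 'M[R]_n).

Definition dot u v : R := (u *m v^T) 0 0.

Lemma dotE u v : dot u v = \sum_i u 0 i * v 0 i.
Proof. by rewrite /dot mxE; apply: eq_bigr => i _; rewrite mxE. Qed.

Lemma dotC u v : dot u v = dot v u.
Proof. by rewrite /dot -[u *m v^T]trmxK trmx_mul trmxK mxE. Qed.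

Lemma dot0l v : dot 0 v = 0.
Proof. by rewrite /dot mul0mx mxE. Qed.

Lemma dotDl u v w : dot (u + v) w = dot u w + dot v w.
Proof. by rewrite /dot mulmxDl mxE. Qed.

Lemma dotZl t u v : dot (t *: u) v = t * dot u v.
Proof. by rewrite /dot -scalemxAl mxE. Qed.

Lemma dotNl u v : dot (- u) v = - dot u v.
Proof. by rewrite /dot mulNmx mxE. Qed.

Lemma dotDr u v w : dot u (v + w) = dot u v + dot u w.
Proof. by rewrite dotC dotDl !(dotC u). Qed.

Lemma dotZr t u v : dot u (t *: v) = t * dot u v.
Proof. by rewrite dotC dotZl dotC. Qed.

Lemma dotNr u v : dot u (- v) = - dot u v.
Proof. by rewrite dotC dotNl dotC. Qed.

Lemma dot_mulmxl u v M : dot (u *m M) v = dot u (v *m M^T).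
Proof. by rewrite /dot trmx_mul trmxK mulmxA. Qed.

Lemma dot_delta u j : dot u (delta_mx 0 j) = u 0 j.
Proof.
rewrite dotC dotE (bigD1 j) //= mxE !eqxx mul1r big1 ?addr0 // => i ij.
by rewrite mxE (negbTE ij) mul0r.
Qed.

Lemma dot_self_ge0 u : 0 <= dot u u.
Proof. by rewrite dotE; apply: sumr_ge0 => i _; rewrite -expr2 sqr_ge0. Qed.

Lemma dot_self_eq0 u : (dot u u == 0) = (u == 0).
Proof.
apply/idP/eqP => [|->]; last by rewrite dot0l.
rewrite dotE psumr_eq0 => [/allP u0|i _]; last by rewrite -expr2 sqr_ge0.
apply/rowP => i; have /implyP := u0 i (mem_index_enum i).
by rewrite mxE -expr2 sqrf_eq0 => /(_ isT)/eqP.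
Qed.

Definition qform M y : R := dot (y *m M) y.

Lemma qformE M y : qform M y = \sum_i \sum_j M i j * y 0 i * y 0 j.
Proof.
rewrite /qform dotE exchange_big; apply: eq_bigr => j _.
by rewrite mxE mulr_suml; apply: eq_bigr => i _; rewrite mulrAC mulrC mulrA.
Qed.

Lemma qform_shift M y v t : M^T = M ->
  qform M (y + t *: v) = qform M y + t * (2 * dot (y *m M) v) + t ^+ 2 * qform M v.
Proof.
move=> M_sym; rewrite /qform mulmxDl -scalemxAl !(dotDl, dotDr, dotZl, dotZr).
rewrite [dot (v *m M) y]dot_mulmxl M_sym (dotC v); ring.
Qed.

Lemma psd_qform_eq0 (M : 'M[R]_n) (y : 'rV[R]_n) : M^T = M ->
  (forall z, 0 <= qform M z) -> qform M y = 0 -> y *m M = 0.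
Proof.
move=> M_sym M_psd qy0.
have : 2 * dot (y *m M) (y *m M) = 0.
  apply: (quadratic_ge0_lin_eq0 (b := qform M (y *m M))) => t.
  by have := M_psd (y + t *: (y *m M)); rewrite qform_shift // qy0 add0r.
by move/eqP; rewrite mulf_eq0 pnatr_eq0 dot_self_eq0 => /eqP.
Qed.

End RowDot.

Section ComplexMatrix.
Variable R : realFieldType.
Local Open Scope complex_scope.
Local Notation Re := (@complex.Re _).
Local Notation Im := (@complex.Im _).

Lemma ReD (z w : R[i]) : Re (z + w) = Re z + Re w.
Proof. by case: z; case: w. Qed.

Lemma ImD (z w : R[i]) : Im (z + w) = Im z + Im w.
Proof. by case: z; case: w. Qed.

Lemma Re_realM (r : R) (z : R[i]) : Re (r%:C * z) = r * Re z.
Proof. by case: z => a b /=; rewrite mul0r subr0. Qed.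

Lemma Im_realM (r : R) (z : R[i]) : Im (r%:C * z) = r * Im z.
Proof. by case: z => a b /=; rewrite mul0r addr0. Qed.

Lemma complex_eq0 (z : R[i]) : z = 0 <-> Re z = 0 /\ Im z = 0.
Proof. by split=> [-> | ]; last case: z => a b /= [-> ->]. Qed.

Lemma Re_sum I (r : seq I) (P : pred I) (F : I -> R[i]) :
  Re (\sum_(i <- r | P i) F i) = \sum_(i <- r | P i) Re (F i).
Proof. by elim/big_rec2: _ => // i a b _ <-; case: (F i); case: b. Qed.

Lemma Im_sum I (r : seq I) (P : pred I) (F : I -> R[i]) :
  Im (\sum_(i <- r | P i) F i) = \sum_(i <- r | P i) Im (F i).
Proof. by elim/big_rec2: _ => // i a b _ <-; case: (F i); case: b. Qed.

Lemma Re_complex_qform n (M : 'M[R[i]]_n) (y : 'rV[R]_n) :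
  Re (\sum_i \sum_j M i j * (y 0 i)%:C * (y 0 j)%:C) = qform (map_mx Re M) y.
Proof.
rewrite qformE Re_sum; apply: eq_bigr => i _; rewrite Re_sum; apply: eq_bigr => j _.
by rewrite mxE; case: (M i j) => a b /=; ring.
Qed.

Lemma Im_complex_qform n (M : 'M[R[i]]_n) (y : 'rV[R]_n) :
  Im (\sum_i \sum_j M i j * (y 0 i)%:C * (y 0 j)%:C) = qform (map_mx Im M) y.
Proof.
rewrite qformE Im_sum; apply: eq_bigr => i _; rewrite Im_sum; apply: eq_bigr => j _.
by rewrite mxE; case: (M i j) => a b /=; ring.
Qed.

Variables m n p : nat.
Implicit Types (M : 'M[R[i]]_(m, n)) (N : 'M[R[i]]_(n, p)).

Lemma Re_mulmx M N :
  map_mx Re (M *m N) = map_mx Re M *m map_mx Re N - map_mx Im M *m map_mx Im N.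
Proof.
apply/matrixP => i j; rewrite !mxE Re_sum -sumrB; apply: eq_bigr => k _.
by rewrite !mxE; case: (M i k) => ? ?; case: (N k j).
Qed.

Lemma Im_mulmx M N :
  map_mx Im (M *m N) = map_mx Re M *m map_mx Im N + map_mx Im M *m map_mx Re N.
Proof.
apply/matrixP => i j; rewrite !mxE Im_sum -big_split; apply: eq_bigr => k _.
by rewrite !mxE; case: (M i k) => ? ?; case: (N k j).
Qed.

Lemma complex_mx_eq0 M : M = 0 <-> map_mx Re M = 0 /\ map_mx Im M = 0.
Proof.
split=> [-> | [/matrixP Re0 /matrixP Im0]].
  by split; apply/matrixP => i j; rewrite !mxE.
apply/matrixP => i j; rewrite mxE; apply/complex_eq0.
by have := Re0 i j; have := Im0 i j; rewrite !mxE.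
Qed.

Lemma Re_real_mx (A : 'M[R]_(m, n)) : map_mx Re (map_mx (real_complex R) A) = A.
Proof. by apply/matrixP => i j; rewrite !mxE. Qed.

Lemma Im_real_mx (A : 'M[R]_(m, n)) : map_mx Im (map_mx (real_complex R) A) = 0.
Proof. by apply/matrixP => i j; rewrite !mxE. Qed.

End ComplexMatrix.

Section ComplexSymmetricMatrix.
Variables (R : realFieldType) (n : nat) (V : 'M[R[i]]_n).
Local Notation Re := (@complex.Re _).
Local Notation Im := (@complex.Im _).
Local Notation U := (map_mx Re V).
Local Notation W := (map_mx Im V).
Hypotheses (V_sym : V^T = V) (U_psd : forall y, 0 <= qform U y).

Lemma complex_kernel_real_parts (z : 'rV[R[i]]_n) : z *m V = 0 ->
  [/\ map_mx Re z *m U = 0, map_mx Re z *m W = 0,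
      map_mx Im z *m U = 0 & map_mx Im z *m W = 0].
Proof.
move=> /complex_mx_eq0[]; rewrite Re_mulmx Im_mulmx => /eqP + /eqP.
rewrite subr_eq0 addr_eq0 => /eqP aU /eqP aW.
set a := map_mx Re z in aU aW *; set b := map_mx Im z in aU aW *.
(* U a.a = W b.a = W a.b = - U b.b *)
have qU_sum : qform U a + qform U b = 0.
  by rewrite /qform aU dot_mulmxl (map_mx_sym _ V_sym) aW dotNr dotC addNr.
have qUa : qform U a = 0 by have := U_psd a; have := U_psd b; lra.
have qUb : qform U b = 0 by have := U_psd a; have := U_psd b; lra.
have aU0 := psd_qform_eq0 (map_mx_sym _ V_sym) U_psd qUa.
have bU0 := psd_qform_eq0 (map_mx_sym _ V_sym) U_psd qUb.
by split; rewrite // ?aW -?aU ?aU0 ?bU0 ?oppr0.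
Qed.

Lemma unitmx_real_kernel :
  V \in unitmx <-> (forall y : 'rV[R]_n, y *m U = 0 -> y *m W = 0 -> y = 0).
Proof.
split=> [V_unit y yU0 yW0 | ker0].
  pose z := map_mx (real_complex R) y.
  have zV0 : z *m V = 0.
    apply/complex_mx_eq0; rewrite Re_mulmx Im_mulmx Re_real_mx Im_real_mx.
    by rewrite yU0 yW0 !mul0mx subr0 addr0.
  have /complex_mx_eq0[Rez0 _] : z = 0 by rewrite -(mulmxK V_unit z) zV0 mul0mx.
  by rewrite -(Re_real_mx y).
rewrite unitmxE unitfE; apply/negP => /det0P[z /eqP z_neq0].
case/complex_kernel_real_parts => aU aW bU bW.
by apply/z_neq0/complex_mx_eq0; split; apply: ker0.
Qed.

End ComplexSymmetricMatrix.

Section PhaseSpace.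
Variables (R : realType) (n : nat).
Implicit Types (Y Z : 'rV[R]_(n + n)) (h : R) (j : 'I_n).

Lemma ycoord_shift Y Z h : ycoord (Y + h *: Z) = ycoord Y + h *: ycoord Z.
Proof. by apply/rowP => k; rewrite !mxE. Qed.

Lemma etacoord_shift Y Z h : etacoord (Y + h *: Z) = etacoord Y + h *: etacoord Z.
Proof. by apply/rowP => k; rewrite !mxE. Qed.

Lemma ycoord_e_y j : ycoord (e_y R j) = delta_mx 0 j.
Proof. by apply/rowP => k; rewrite !mxE eq_lshift. Qed.

Lemma ycoord_e_eta j : ycoord (e_eta R j) = 0.
Proof. by apply/rowP => k; rewrite !mxE eq_lrshift andbF. Qed.

Lemma etacoord_e_eta j : etacoord (e_eta R j) = delta_mx 0 j.
Proof. by apply/rowP => k; rewrite !mxE eq_rshift. Qed.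

Lemma ycoord_shift_eta Y j h : ycoord (Y + h *: e_eta R j) = ycoord Y.
Proof. by rewrite ycoord_shift ycoord_e_eta scaler0 addr0. Qed.

Lemma derive_eta_ycoord (psi : 'rV[R]_n -> R) Y j :
  'D_(e_eta R j) (fun Z => psi (ycoord Z)) Y = 0.
Proof.
apply: (derive_quadratic (b := 0)) => h.
by rewrite ycoord_shift_eta !mulr0 !addr0.
Qed.

Definition eta_Ay (A : 'M[R]_n) Y : 'rV[R]_n := etacoord Y - ycoord Y *m A^T.

Lemma eta_Ay_shift_eta A Y j h :
  eta_Ay A (Y + h *: e_eta R j) = eta_Ay A Y + h *: delta_mx 0 j.
Proof. by rewrite /eta_Ay ycoord_shift_eta etacoord_shift etacoord_e_eta addrAC. Qed.

End PhaseSpace.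

Section HamiltonFlow.
Variables (R : realType) (n : nat) (A : 'M[R]_n) (V : 'M[R[i]]_n).
Local Notation Re := (@complex.Re _).
Local Notation Im := (@complex.Im _).
Local Notation U := (map_mx Re V).
Local Notation W := (map_mx Im V).
Local Notation H := (hamilton (fun Z => Im (qAV A V Z))).
Implicit Types (Y : 'rV[R]_(n + n)).

Lemma Re_qAV Y :
  Re (qAV A V Y) = dot (eta_Ay A Y) (eta_Ay A Y) + 2^-1 * qform U (ycoord Y).
Proof.
rewrite /qAV -(rmorph_nat (real_complex R)) -fmorphV ReD Re_realM.
by rewrite Re_complex_qform /= dotE; congr (_ + _); apply: eq_bigr => i _; rewrite expr2.
Qed.

Lemma Im_qAV Y : Im (qAV A V Y) = 2^-1 * qform W (ycoord Y).
Proof.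
rewrite /qAV -(rmorph_nat (real_complex R)) -fmorphV ImD Im_realM.
by rewrite Im_complex_qform /= add0r.
Qed.

Hypothesis V_sym : V^T = V.

Lemma derive_y_Im_qAV Y j :
  'D_(e_y R j) (fun Z => Im (qAV A V Z)) Y = (ycoord Y *m W) 0 j.
Proof.
apply: (derive_quadratic (b := 2^-1 * qform W (delta_mx 0 j))) => h.
rewrite !Im_qAV ycoord_shift ycoord_e_y qform_shift ?map_mx_sym // dot_delta.
by field.
Qed.

Lemma hamilton_Im_qAV f Y :
  H f Y = - \sum_j (ycoord Y *m W) 0 j * 'D_(e_eta R j) f Y.
Proof.
rewrite /hamilton -sumrN; apply: eq_bigr => j _; rewrite derive_y_Im_qAV.
have -> : (fun Z => Im (qAV A V Z)) = (fun Z => 2^-1 * qform W (ycoord Z)).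
  by apply: funext => Z; rewrite Im_qAV.
by rewrite (derive_eta_ycoord (fun y => 2^-1 * qform W y)) mul0r sub0r.
Qed.

Lemma hamilton_ycoord (psi : 'rV[R]_n -> R) :
  H (fun Z => psi (ycoord Z)) = fun _ => 0.
Proof.
apply: funext => Y; rewrite hamilton_Im_qAV big1 ?oppr0 // => j _.
by rewrite derive_eta_ycoord mulr0.
Qed.

Lemma hamilton_Re_qAV :
  H (fun Z => Re (qAV A V Z)) = fun Y => - (2 * dot (ycoord Y *m W) (eta_Ay A Y)).
Proof.
apply: funext => Y; rewrite hamilton_Im_qAV dotE mulr_sumr; congr (- _).
apply: eq_bigr => j _; rewrite (derive_quadratic (c := 2 * eta_Ay A Y 0 j) (b := 1)).
  by rewrite mulrCA.
move=> h; rewrite !Re_qAV ycoord_shift_eta eta_Ay_shift_eta.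
move: (eta_Ay A Y) => d; rewrite dotDl !dotDr !dotZl !dotZr (dotC _ d) !dot_delta.
by rewrite mxE !eqxx /=; ring.
Qed.

Lemma hamilton2_Re_qAV :
  H (fun Y => - (2 * dot (ycoord Y *m W) (eta_Ay A Y))) =
  fun Y => 2 * dot (ycoord Y *m W) (ycoord Y *m W).
Proof.
apply: funext => Y; rewrite hamilton_Im_qAV dotE mulr_sumr -sumrN.
apply: eq_bigr => j _.
rewrite (derive_quadratic (c := - (2 * (ycoord Y *m W) 0 j)) (b := 0)); first by ring.
move=> h; rewrite ycoord_shift_eta eta_Ay_shift_eta dotDr dotZr dot_delta; ring.
Qed.

Lemma iter_hamilton_Re_qAV k :
  iter k.+3 H (fun Z => Re (qAV A V Z)) = fun _ => 0.
Proof.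
elim: k => [|k IHk]; last by rewrite iterS IHk (hamilton_ycoord (fun _ => 0)).
rewrite /= hamilton_Re_qAV hamilton2_Re_qAV.
exact: (hamilton_ycoord (fun y => 2 * dot (y *m W) (y *m W))).
Qed.

End HamiltonFlow.

Section SingularSpace.
Variables (R : realType) (n : nat) (A : 'M[R]_n) (V : 'M[R[i]]_n).
Local Notation Re := (@complex.Re _).
Local Notation Im := (@complex.Im _).
Local Notation U := (map_mx Re V).
Local Notation W := (map_mx Im V).
Hypotheses (V_sym : V^T = V) (U_psd : forall y, 0 <= qform U y).

Lemma singular_space_qAV Y : singular_space (qAV A V) Y <->
  [/\ eta_Ay A Y = 0, ycoord Y *m U = 0 & ycoord Y *m W = 0].
Proof.
split=> [SY | [d0 yU0 yW0] [|[|[|k]]]].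
- have := SY 0%N; have := SY 2%N.
  rewrite /= (hamilton_Re_qAV A V_sym) (hamilton2_Re_qAV A V_sym) Re_qAV => W0 Re0.
  move/eqP: W0; rewrite mulf_eq0 pnatr_eq0 dot_self_eq0 => /eqP yW0.
  move/eqP: Re0; rewrite paddr_eq0 ?dot_self_ge0 ?mulr_ge0 ?invr_ge0 ?ler0n //.
  rewrite dot_self_eq0 mulf_eq0 invr_eq0 pnatr_eq0 => /andP[/eqP d0 /eqP qU0].
  by split=> //; apply: psd_qform_eq0 (map_mx_sym _ V_sym) U_psd qU0.
- by rewrite /= Re_qAV d0 dot0l /qform yU0 dot0l mulr0 addr0.
- by rewrite /= (hamilton_Re_qAV A V_sym) yW0 dot0l mulr0 oppr0.
- by rewrite /= (hamilton_Re_qAV A V_sym) (hamilton2_Re_qAV A V_sym) yW0 dot0l mulr0.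
- by rewrite (iter_hamilton_Re_qAV A V_sym).
Qed.

Lemma elliptic_qAV_real_kernel : elliptic_on_singular_space (qAV A V) <->
  (forall y : 'rV[R]_n, y *m U = 0 -> y *m W = 0 -> y = 0).
Proof.
split=> [ell y yU0 yW0 | ker0 Y /singular_space_qAV[d0 yU0 yW0] _].
  pose Y := row_mx y (y *m A^T).
  have yY : ycoord Y = y by rewrite /ycoord row_mxKl.
  have d0 : eta_Ay A Y = 0 by rewrite /eta_Ay yY /etacoord row_mxKr subrr.
  have SY : singular_space (qAV A V) Y by apply/singular_space_qAV; rewrite yY.
  have qY0 : qAV A V Y = 0.
    apply/complex_eq0; rewrite Re_qAV Im_qAV /qform yY yU0 yW0 d0 !dot0l.
    by rewrite mulr0 addr0.
  by rewrite -yY (ell Y SY qY0); apply/rowP => k; rewrite !mxE.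
have y0 : ycoord Y = 0 by apply: ker0.
move: d0; rewrite /eta_Ay y0 mul0mx subr0 => eta0.
by rewrite -(hsubmxK Y) -/(ycoord Y) -/(etacoord Y) y0 eta0 row_mx0.
Qed.

End SingularSpace.

Lemma re_psdE (R : realType) n (V : 'M[R[i]]_n) :
  re_psd V <-> forall y, 0 <= qform (map_mx (@complex.Re _) V) y.
Proof.
suff qE y : qform (map_mx (@complex.Re _) V) y =
    \sum_i \sum_j complex.Re (V i j) * y 0 i * y 0 j.
  by split=> psd y; rewrite ?qE // -qE.
by rewrite qformE; apply: eq_bigr => i _; apply: eq_bigr => j _; rewrite mxE.
Qed.

Unset Implicit Arguments.
Theorem lemma2p2 (R : realType) (n : nat) (A : 'M[R]_n) (V : 'M[R[i]]_n) :
  V^T = V -> re_psd V ->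
  (elliptic_on_singular_space (qAV A V) <-> V \in unitmx).
Proof.
move=> V_sym /re_psdE U_psd.
by rewrite (elliptic_qAV_real_kernel A V_sym U_psd) (unitmx_real_kernel V_sym U_psd).
Qed.
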